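(* Let $X_\Sigma$ be a projective toric variety and $D$ an $\mathbf R$-ample divisor on $X_\Sigma$. For each $\lambda\in\Lambda^D$, the stratum $S^{\chi_D}_\lambda$ is smooth, irreducible, and open in its Zariski closure $\overline{S^{\chi_D}_\lambda}$. More precisely, $S^{\chi_D}_\lambda=V(x_\rho:\rho\in S)\setminus\bigcup_RV(x_\rho:\rho\in R)$, where $S$ is a subset of $\Sigma(1)$ containing some primitive collection and $R$ runs through some collection of subsets of $\Sigma(1)\setminus S$.
   Context: $\Sigma$ complete fan with rays $\Sigma(1)$, generators $u_\rho$, divisors $D_\rho$; a primitive collection is $C\subset\Sigma(1)$ not contained in $\sigma(1)$ for any cone $\sigma$ while every proper subset is; $\mathbf C^{\Sigma(1)}=\mathrm{Spec}\,\mathbf C[x_\rho]$, $Z(\Sigma)=\bigcup_C V(x_\rho:\rho\in C)$. $\Gamma(G)=\{b\in\mathbf Z^{\Sigma(1)}:\sum b_\rho u_\rho=0\}$ (one-parameter subgroups of $G=\mathrm{Hom}(\mathrm{Cl}(X_\Sigma),\mathbf C^\times)$), $\langle\chi_D,b\rangle=\sum a_\rho b_\rho$ for $D=\sum a_\rho D_\rho$ extended $\mathbf R$-linearly, $\Gamma(G)_{\mathbf R}\subset\mathbf R^{\Sigma(1)}$ with restricted standard norm. $\mathbf R$-ample divisors are elements of the ample cone in $\mathrm{Pic}(X_\Sigma)_{\mathbf R}$. For $x\in Z(\Sigma)$ let $\sigma_x=\{v\in\Gamma(G)_{\mathbf R}:v_\rho\ge0\text{ whenever }x_\rho\ne0\}$;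 $v\mapsto\langle\chi_D,v\rangle/\|v\|$ attains its minimum $M^D(x)<0$ on $\sigma_x\setminus\{0\}$ exactly on one ray, and $\lambda^D_x$ denotes the vector on that ray with $\|\lambda^D_x\|=-M^D(x)$. $\Lambda^D=\{\lambda^D_x:x\in Z(\Sigma)\}$, $S^{\chi_D}_\lambda=\{x\in Z(\Sigma):\lambda^D_x=\lambda\}$. *)

From HB Require Import structures.
From mathcomp Require Import all_boot all_order all_algebra complex.
From mathcomp Require Import reals.
Set Implicit Arguments. Unset Strict Implicit. Unset Printing Implicit Defensive.
Import Order.TTheory GRing.Theory Num.Theory.
Local Open Scope ring_scope.

Section Toric.
Variables (R : realType) (n r : nat).
(* u rho = the primitive ray generator u_rho in N = Z^n, rho in Sigma(1) = 'I_r *)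
Variable u : 'I_r -> 'I_n -> int.
(* the cones of the fan, each cone sigma recorded by its ray set sigma(1) *)
Variable cones : {set {set 'I_r}}.

Definition pair_mu (m : 'I_n -> R) (rho : 'I_r) : R :=
  \sum_(i < n) m i * (u rho i)%:~R.

Definition in_cone (S : {set 'I_r}) (v : 'I_n -> R) : Prop :=
  exists c : 'I_r -> R,
    [/\ forall rho, 0 <= c rho, forall rho, rho \notin S -> c rho = 0
      & forall i, v i = \sum_(rho < r) c rho * (u rho i)%:~R].

Definition is_face (T S : {set 'I_r}) : Prop :=
  exists m : 'I_n -> R, (forall rho, rho \in S -> 0 <= pair_mu m rho) /\
    T = [set rho in S | pair_mu m rho == 0].

Definition primitive_vector (w : 'I_n -> int) : Prop :=
  forall (k : nat) (v : 'I_n -> int), (forall i, w i = k%:Z * v i) -> k = 1%N.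

Definition complete_fan : Prop :=
  [/\ (forall rho, primitive_vector (u rho)),
      (forall rho, [set rho] \in cones),
      (forall s, s \in cones -> exists m : 'I_n -> R,
          forall rho, rho \in s -> 0 < pair_mu m rho),
      (forall s T, s \in cones -> is_face T s -> T \in cones)
    &
      (forall s t, s \in cones -> t \in cones ->
        [/\ (forall v, (in_cone s v /\ in_cone t v) <-> in_cone (s :&: t) v),
            is_face (s :&: t) s & is_face (s :&: t) t])] /\
  (forall v : 'I_n -> R, exists2 s, s \in cones & in_cone s v).

Definition maximal_cone (s : {set 'I_r}) : Prop :=
  s \in cones /\ forall t, t \in cones -> s \subset t -> t = s.

(* D = sum a_rho D_rho (real coefficients) is R-ample: its class lies in the
   ample cone of Pic(X_Sigma)_R, i.e. D is R-Cartier with a strictly convex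
   support function (Cartier data m_sigma in M_R for the maximal cones). *)
Definition R_ample (a : 'I_r -> R) : Prop :=
  forall s, maximal_cone s -> exists m : 'I_n -> R,
    (forall rho, rho \in s -> pair_mu m rho = - a rho) /\
    (forall rho, rho \notin s -> - a rho < pair_mu m rho).

(* X_Sigma is projective: it carries an ample (integral, Cartier) divisor. *)
Definition projective_fan : Prop :=
  exists a : 'I_r -> int, forall s, maximal_cone s -> exists m : 'I_n -> int,
    (forall rho, rho \in s -> \sum_(i < n) m i * u rho i = - a rho) /\
    (forall rho, rho \notin s -> - a rho < \sum_(i < n) m i * u rho i).

Definition primitive_collection (C : {set 'I_r}) : Prop :=
  (forall s, s \in cones -> ~~ (C \subset s)) /\
  (forall C' : {set 'I_r}, C' \proper C -> exists2 s, s \in cones & C' \subset s).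

Definition in_V (S : {set 'I_r}) (x : 'I_r -> R[i]) : Prop :=
  forall rho, rho \in S -> x rho = 0.

Definition in_Z (x : 'I_r -> R[i]) : Prop :=
  exists C, primitive_collection C /\ in_V C x.

Definition in_GammaR (v : 'I_r -> R) : Prop :=
  forall i : 'I_n, \sum_(rho < r) v rho * (u rho i)%:~R = 0.

Definition chi_pair (a : 'I_r -> R) (v : 'I_r -> R) : R :=
  \sum_(rho < r) a rho * v rho.

Definition eucl_norm (v : 'I_r -> R) : R := Num.sqrt (\sum_(rho < r) v rho ^+ 2).

Definition in_sigma_x (x : 'I_r -> R[i]) (v : 'I_r -> R) : Prop :=
  in_GammaR v /\ forall rho, x rho != 0 -> 0 <= v rho.

(* lam = lambda^D_x : lam lies in sigma_x \ {0}, minimizes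
   v |-> <chi_D, v>/||v|| on sigma_x \ {0}, and ||lam|| = - M^D(x). *)
Definition is_lambda (a : 'I_r -> R) (x : 'I_r -> R[i]) (lam : 'I_r -> R) : Prop :=
  [/\ in_sigma_x x lam, lam <> (fun _ => 0),
      (forall v, in_sigma_x x v -> v <> (fun _ => 0) ->
         chi_pair a lam / eucl_norm lam <= chi_pair a v / eucl_norm v)
    & eucl_norm lam = - (chi_pair a lam / eucl_norm lam)].

Definition in_Lambda (a : 'I_r -> R) (lam : 'I_r -> R) : Prop :=
  exists x, in_Z x /\ is_lambda a x lam.

Definition in_stratum (a : 'I_r -> R) (lam : 'I_r -> R) (x : 'I_r -> R[i]) : Prop :=
  in_Z x /\ is_lambda a x lam.

End Toric.

From HB Require Import structures.
From mathcomp Require Import all_boot all_order all_algebra complex.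
From mathcomp Require Import reals boolp.
Set Implicit Arguments.
Unset Strict Implicit.
Unset Printing Implicit Defensive.
Import Order.TTheory GRing.Theory Num.Theory.
Local Open Scope ring_scope.

(* Let [S] be the set of rays where [lam] is negative.  Every point of the
   stratum vanishes on [S], since [lam] is nonnegative wherever [x] is nonzero.
   [S] lies in no cone: for a maximal cone [s] containing it, ampleness gives
   [m] with [<m, u_rho> + a_rho] zero on [s] and positive off [s], and pairing
   with [lam] in Gamma(G) yields [<chi_D, lam> >= 0], whereas [<chi_D, lam>] is
   [- ||lam||^2 < 0].  Hence [S] contains a primitive collection.  Being in the
   stratum depends only on the zero pattern of [x], and for points of V(S) it is
   preserved when the zero pattern shrinks (the points stay in Z(Sigma) through
   the primitive collection in [S], and sigma_x only shrinks).  So the stratum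
   is V(S) minus the V(T) over the patterns [S :|: T] that miss it. *)

Section Fan.
Variables (r : nat) (cones : {set {set 'I_r}}).

Lemma exists_maximal_cone (s0 : {set 'I_r}) :
  s0 \in cones -> exists2 s, maximal_cone cones s & s0 \subset s.
Proof.
move=> s0_cone.
pose P := [pred t : {set 'I_r} | (t \in cones) && (s0 \subset t)].
have P_s0 : P s0 by rewrite /P /= s0_cone subxx.
case: (arg_maxnP (fun t : {set 'I_r} => #|t|) P_s0).
move=> s /andP[s_cone s0s] smax.
exists s => //; split=> // t t_cone st.
apply/eqP; rewrite eq_sym eqEcard st /=.
by apply: smax; rewrite /P /= t_cone (subset_trans s0s st).
Qed.

Lemma primitive_collection_sub (S : {set 'I_r}) :
  (forall s, s \in cones -> ~~ (S \subset s)) ->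
  exists2 C, primitive_collection cones C & C \subset S.
Proof.
move=> S_notin_cone.
pose P := [pred C : {set 'I_r} |
  (C \subset S) && [forall s in cones, ~~ (C \subset s)]].
have P_S : P S.
  by rewrite /P /= subxx; apply/forall_inP => s; exact: S_notin_cone.
case: (arg_minnP (fun C : {set 'I_r} => #|C|) P_S).
move=> C /andP[CS /forall_inP C_notin] Cmin.
exists C => //; split=> // C' C'C.
have /forall_inPn[s s_cone] : ~~ [forall s in cones, ~~ (C' \subset s)].
  apply/negP => C'_notin.
  have := Cmin C'; rewrite /P /= C'_notin (subset_trans (proper_sub C'C) CS).
  by move=> /(_ isT); rewrite leqNgt proper_card.
by rewrite negbK; exists s.
Qed.

End Fan.

Definition vanishing_point (R : realType) (r : nat) (K : {set 'I_r}) :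
  'I_r -> R[i] := fun rho => if rho \in K then 0 else 1.

Lemma vanishing_point_neq0 (R : realType) (r : nat) (K : {set 'I_r}) rho :
  (vanishing_point R K rho != 0) = (rho \notin K).
Proof.
by rewrite /vanishing_point; case: (rho \in K); rewrite ?eqxx ?oner_eq0.
Qed.

Section Stratum.
Variables (R : realType) (n r : nat) (u : 'I_r -> 'I_n -> int).
Variable cones : {set {set 'I_r}}.

Lemma eucl_norm_gt0 (v : 'I_r -> R) : v <> (fun _ => 0) -> 0 < eucl_norm v.
Proof.
move=> v_neq0; have sqr_ge0 rho (_ : true) : 0 <= v rho ^+ 2 by exact: sqr_ge0.
rewrite sqrtr_gt0 lt_def sumr_ge0 // andbT psumr_eq0 //.
apply: contra_notN v_neq0 => /allP v0; apply: funext => rho.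
by apply/eqP; rewrite -sqrf_eq0; exact: (v0 rho (mem_index_enum _)).
Qed.

Lemma is_lambda_chi_pair_lt0 (a : 'I_r -> R) x lam :
  is_lambda u a x lam -> chi_pair a lam < 0.
Proof.
case=> _ lam_neq0 _ norm_lam; have norm_gt0 := eucl_norm_gt0 lam_neq0.
rewrite ltNge; apply/negP => chi_ge0.
have : 0 <= chi_pair a lam / eucl_norm lam by rewrite divr_ge0 // ltW.
by rewrite leNgt -oppr_gt0 -norm_lam norm_gt0.
Qed.

Lemma in_GammaR_pair_mu (m : 'I_n -> R) (v : 'I_r -> R) :
  in_GammaR u v -> \sum_(rho < r) v rho * pair_mu u m rho = 0.
Proof.
move=> v_Gamma; rewrite /pair_mu.
under eq_bigr do rewrite big_distrr.
rewrite exchange_big /= big1 // => i _.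
under eq_bigr do rewrite mulrCA.
by rewrite -big_distrr /= v_Gamma mulr0.
Qed.

Lemma ample_chi_pair_ge0 (a v : 'I_r -> R) (s : {set 'I_r}) :
  R_ample u cones a -> maximal_cone cones s -> in_GammaR u v ->
  (forall rho, rho \notin s -> 0 <= v rho) -> 0 <= chi_pair a v.
Proof.
move=> ample s_max v_Gamma v_ge0.
have [m [m_on_s m_off_s]] := ample s s_max.
have -> : chi_pair a v = \sum_(rho < r) (a rho + pair_mu u m rho) * v rho.
  under [RHS]eq_bigr do rewrite mulrDl [pair_mu _ _ _ * _]mulrC.
  by rewrite big_split /= in_GammaR_pair_mu // addr0.
apply: sumr_ge0 => rho _; have [rs | rs] := boolP (rho \in s).
  by rewrite m_on_s // subrr mul0r.
by rewrite mulr_ge0 ?v_ge0 // -lerBlDl sub0r ltW ?m_off_s.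
Qed.

Lemma negative_support_notin_cone (a lam : 'I_r -> R) x (s0 : {set 'I_r}) :
  R_ample u cones a -> is_lambda u a x lam -> s0 \in cones ->
  ~~ ([set rho | lam rho < 0] \subset s0).
Proof.
move=> ample lam_x s0_cone; apply/negP => neg_s0.
have [s s_max s0s] := exists_maximal_cone s0_cone.
have [[lam_Gamma _] _ _ _] := lam_x.
suff : 0 <= chi_pair a lam by rewrite leNgt (is_lambda_chi_pair_lt0 lam_x).
apply: (ample_chi_pair_ge0 ample s_max lam_Gamma) => rho rs.
rewrite leNgt; apply: contra rs => lam_lt0.
by apply: (subsetP (subset_trans neg_s0 s0s)); rewrite inE.
Qed.

Variables (a lam : 'I_r -> R) (C : {set 'I_r}).
Hypotheses (C_prim : primitive_collection cones C)
  (C_neg : C \subset [set rho | lam rho < 0]).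

Lemma in_stratum_vanish_neg (x : 'I_r -> R[i]) :
  in_stratum u cones a lam x -> in_V [set rho | lam rho < 0] x.
Proof.
move=> [_ [[_ lam_ge0] _ _ _]] rho; rewrite inE => lam_lt0.
by apply/eqP; apply: contraTT lam_lt0 => /lam_ge0; rewrite leNgt.
Qed.

(* sigma_y is contained in sigma_x, so [lam] stays a minimizer. *)
Lemma in_stratum_supp_mono (x y : 'I_r -> R[i]) :
  in_V [set rho | lam rho < 0] y -> (forall rho, x rho != 0 -> y rho != 0) ->
  in_stratum u cones a lam x -> in_stratum u cones a lam y.
Proof.
move=> y_neg supp_xy [_ [[lam_Gamma _] lam_neq0 lam_min norm_lam]].
split; first by exists C; split=> // rho /(subsetP C_neg); exact: y_neg.
split=> //; last first.
  by move=> v [v_Gamma v_ge0]; apply: lam_min; split=> // rho /supp_xy /v_ge0.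
split=> // rho; apply: contraNT; rewrite -ltNge => lam_lt0.
by rewrite y_neg ?inE.
Qed.

Lemma in_stratum_vanishing_point (x : 'I_r -> R[i]) (K : {set 'I_r}) :
  [set rho | lam rho < 0] \subset K -> in_V K x ->
  in_stratum u cones a lam x -> in_stratum u cones a lam (vanishing_point R K).
Proof.
move=> neg_K x_K; apply: in_stratum_supp_mono => rho.
  by move=> /(subsetP neg_K) rho_K; rewrite /vanishing_point rho_K.
by rewrite vanishing_point_neq0; apply: contra => /x_K ->.
Qed.

Lemma in_stratum_of_zero_pattern (x : 'I_r -> R[i]) :
  in_V [set rho | lam rho < 0] x ->
  in_stratum u cones a lam (vanishing_point R [set rho | x rho == 0]) ->
  in_stratum u cones a lam x.
Proof.
move=> x_neg; apply: in_stratum_supp_mono => // rho.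
by rewrite vanishing_point_neq0 inE.
Qed.

End Stratum.

Theorem theorem5p31 (R : realType) (n r : nat) (u : 'I_r -> 'I_n -> int)
    (cones : {set {set 'I_r}}) (a : 'I_r -> R) (lam : 'I_r -> R) :
  complete_fan R u cones ->
  projective_fan u cones ->
  R_ample u cones a ->
  in_Lambda u cones a lam ->
  exists S : {set 'I_r},
    (exists C, primitive_collection cones C /\ C \subset S) /\
    exists Rs : {set {set 'I_r}},
      (forall T, T \in Rs -> T \subset ~: S) /\
      forall x : 'I_r -> R[i],
        in_stratum u cones a lam x <->
        (in_V S x /\ ~ (exists2 T, T \in Rs & in_V T x)).
Proof.
move=> _ _ ample [x0 [_ lam_x0]].
have [C C_prim C_neg] := primitive_collection_sub
  (fun s0 => negative_support_notin_cone ample lam_x0 (s0 := s0)).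
set S := [set rho | lam rho < 0] in C_neg *.
pose stratum_pattern K := `[< in_stratum u cones a lam (vanishing_point R K) >].
exists S; split; first by exists C.
exists [set T : {set 'I_r} | (T \subset ~: S) && ~~ stratum_pattern (S :|: T)].
split=> [T | x]; first by rewrite inE => /andP[].
split=> [x_st | [x_S x_off]].
  have x_S := in_stratum_vanish_neg x_st; split=> // -[T].
  rewrite inE => /andP[_ /asboolPn not_st] x_T; apply: not_st.
  apply: (in_stratum_vanishing_point C_prim C_neg) x_st.
    by rewrite subsetUl.
  by move=> rho; rewrite in_setU => /orP[/x_S | /x_T].
pose K := [set rho | x rho == 0].
have K_eq : S :|: (K :\: S) = K.
  rewrite setDE setUIr setUCr setIT; apply/setUidPr/subsetP => rho /x_S.
  by rewrite inE => ->.
apply: (in_stratum_of_zero_pattern C_prim C_neg x_S); apply: contrapT => not_st.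
apply: x_off; exists (K :\: S).
  by rewrite inE subsetDr K_eq; apply/asboolPn.
by move=> rho; rewrite !inE => /andP[_ /eqP].
Qed.
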